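(* Let $c>0$. Suppose that for every $d$ that is a power of $2$ we are given a nonsingular $d\times d$ matrix $A=A_d$ with all entries in $\{+1,-1\}$ such that the matrix $B:=2^dA^{-1}$ is integral, has nonnegative row sums, and every entry of the first row of $B$ is nonnegative and has absolute value at least $(cd)^{d/2}$. Then there is a constant $c'>0$ (depending only on $c$) such that for every such $d$ and every integral vector $b\in\mathbb{Z}^d$ with $b>0$, the unique solution $z$ of $Az=b$ has first component satisfying $z_1>0$ and $|z_1|\ge (c'd)^{d/2}$.
   Context: For $x\in\mathbb{R}^n$, the notation $x>0$ means that all entries of $x$ are nonnegative and $x\neq 0$. (In the paper, a quantity $Q=Q(d)$ is called ''large'' if there is a constant $c>0$ with $|Q|\ge (cd)^{d/2}$ for all considered $d$; the hypotheses and conclusion above spell this out.) *)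

From mathcomp Require Import all_boot all_order all_algebra.
From mathcomp Require Import reals.
Set Implicit Arguments. Unset Strict Implicit. Unset Printing Implicit Defensive.
Import Order.TTheory GRing.Theory Num.Theory.
Local Open Scope ring_scope.

Lemma pow2_gt0 (k : nat) : (0 < 2 ^ k)%N.
Proof. by rewrite expn_gt0. Qed.

(* The first index of 'I_(2^k) (row/column number 1 in the paper). *)
Definition first_idx (k : nat) : 'I_(2 ^ k) := Ordinal (pow2_gt0 k).

Definition good_matrix (R : realType) (c : R) (k : nat) (A : 'M[R]_(2 ^ k)) : Prop :=
  let d := (2 ^ k)%N in
  let B := (2%:R ^+ d) *: invmx A in
  [/\ (forall i j, A i j = 1 \/ A i j = -1),
      A \in unitmx,
      (forall i j, B i j \is a Num.int),
      (forall i, 0 <= \sum_j B i j) &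
      (forall j, 0 <= B (first_idx k) j /\
                 Num.sqrt (c * d%:R) ^+ d <= `|B (first_idx k) j|)].

From mathcomp Require Import all_boot all_order all_algebra.
From mathcomp Require Import reals.
Set Implicit Arguments. Unset Strict Implicit. Unset Printing Implicit Defensive.
Import Order.TTheory GRing.Theory Num.Theory.
Local Open Scope ring_scope.

(* [2^d z_1] is the first row of [B = 2^d A^-1] applied to [b].  That row is
   nonnegative with every entry at least [(cd)^(d/2)], and the nonzero
   nonnegative integral [b] has some [b_i >= 1], so [2^d z_1 >= (cd)^(d/2)],
   i.e. [z_1 >= (cd/4)^(d/2)]: [c' = c/4] works. *)

Lemma weighted_sum_ge_weight_lb (R : archiNumDomainType) (n : nat) (w : 'I_n -> R)
    (m : R) (b : 'cV[R]_n) :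
  (forall j, 0 <= w j) -> (forall j, m <= w j) ->
  (forall j, b j 0 \is a Num.int) -> (forall j, 0 <= b j 0) -> b != 0 ->
  m <= \sum_j w j * b j 0.
Proof.
move=> w_ge0 m_le_w b_int b_ge0 /cV0Pn[i bi_neq0].
have bi_ge1 : 1 <= b i 0.
  by rewrite -(ger0_norm (b_ge0 i)) norm_intr_ge1.
rewrite (bigD1 i) //=; apply: le_trans (m_le_w i) _.
apply: le_trans (_ : w i <= w i * b i 0) _.
  by rewrite -{1}(mulr1 (w i)) ler_wpM2l.
by rewrite lerDl sumr_ge0 // => j _; rewrite mulr_ge0.
Qed.

Lemma scaled_inverse_row_mul (R : comUnitRingType) (n : nat) (s : R)
    (A : 'M[R]_n) (z b : 'cV[R]_n) (i : 'I_n) :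
  A \in unitmx -> A *m z = b ->
  \sum_j (s *: invmx A) i j * b j 0 = s * z i 0.
Proof.
move=> A_unit Az_b.
have -> : z = invmx A *m b by rewrite -Az_b mulKmx.
rewrite [X in _ * X]mxE mulr_sumr; apply: eq_bigr => j _.
by rewrite mxE mulrA.
Qed.

Lemma sqrtr_divr_sqr (R : rcfType) (x a : R) :
  0 <= x -> 0 < a -> Num.sqrt (x / a ^+ 2) = Num.sqrt x / a.
Proof.
move=> x_ge0 a_gt0.
by rewrite sqrtrM // -exprVn sqrtr_sqr ger0_norm // invr_ge0 ltW.
Qed.

Theorem mainTheorem4 (R : realType) (c : R) (hc : 0 < c) :
  exists c' : R, 0 < c' /\
  forall A : forall k : nat, 'M[R]_(2 ^ k),
    (forall k, good_matrix c (A k)) ->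
    forall (k : nat) (b z : 'cV[R]_(2 ^ k)),
      (forall i, b i 0 \is a Num.int) ->
      (forall i, 0 <= b i 0) -> b != 0 ->
      A k *m z = b ->
      0 < z (first_idx k) 0 /\
      Num.sqrt (c' * (2 ^ k)%:R) ^+ (2 ^ k) <= `|z (first_idx k) 0|.
Proof.
exists (c / 4); split; first by rewrite divr_gt0.
move=> A A_good k b z b_int b_ge0 b_neq0 Az_b.
have [_ A_unit _ _ first_row] := A_good k.
set d := (2 ^ k)%N in A_unit first_row Az_b *.
have d_gt0 : (0 < d)%N by rewrite expn_gt0.
have bound_gt0 : 0 < Num.sqrt (c * d%:R) ^+ d.
  by rewrite exprn_gt0 // sqrtr_gt0 mulr_gt0 // ltr0n.
have bound_le : Num.sqrt (c * d%:R) ^+ d <= 2%:R ^+ d * z (first_idx k) 0.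
  rewrite -(scaled_inverse_row_mul _ _ A_unit Az_b).
  apply: weighted_sum_ge_weight_lb => // j; have [Bj_ge0 Bj_ge] := first_row j.
  - exact: Bj_ge0.
  - by rewrite -(ger0_norm Bj_ge0).
have two_pow_gt0 : (0 : R) < 2%:R ^+ d by rewrite exprn_gt0.
have z_gt0 : 0 < z (first_idx k) 0.
  by rewrite -(pmulr_rgt0 _ two_pow_gt0) (lt_le_trans bound_gt0).
split => //.
have -> : c / 4 * d%:R = c * d%:R / 2%:R ^+ 2 by rewrite mulrAC -natrX.
have cd_ge0 : 0 <= c * d%:R by rewrite mulr_ge0 // ltW.
rewrite sqrtr_divr_sqr // exprMn exprVn gtr0_norm //.
by rewrite ler_pdivrMr // [_ * 2%:R ^+ d]mulrC.
Qed.
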